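(* Let $\Sigma\subseteq\mathcal A^{\mathbf N}$ be a one-sided subshift over a finite alphabet $\mathcal A$ and let $F\subseteq\Sigma$ be a finite set with dense orbit. Then for every $n$, the number $e_l(n)$ of words of length $n$ of the language of $\Sigma$ that are not left-prolongable satisfies $e_l(n)\le|F|$.
   Context: $\Sigma$ is closed and invariant under the shift $S$. $F$ has dense orbit if $\bigcup_{\omega\in F}\{S^m\omega:m\ge0\}$ is dense in $\Sigma$. The language $\mathcal L$ of $\Sigma$ is the set of finite words occurring as subwords of elements of $\Sigma$. A word $v\in\mathcal L$ is left-prolongable if $av\in\mathcal L$ for some $a\in\mathcal A$. *)

From mathcomp Require Import all_boot.
From mathcomp Require Import boolp.
Set Implicit Arguments. Unset Strict Implicit. Unset Printing Implicit Defensive.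

Definition shift (A : Type) (w : nat -> A) : nat -> A := fun i => w i.+1.

(* Convergence in the product topology of A^N (A discrete):
   u_k --> w iff for every N, eventually u_k agrees with w on [0, N). *)
Definition seq_converges (A : Type) (u : nat -> nat -> A) (w : nat -> A) : Prop :=
  forall N, exists K, forall k, K <= k -> forall i, i < N -> u k i = w i.

(* Closed subset of A^N (A^N is metrizable, so sequential closedness is closedness). *)
Definition closed_set (A : Type) (Sigma : (nat -> A) -> Prop) : Prop :=
  forall (u : nat -> nat -> A) w,
    (forall k, Sigma (u k)) -> seq_converges u w -> Sigma w.

Definition subshift (A : Type) (Sigma : (nat -> A) -> Prop) : Prop :=
  closed_set Sigma /\ (forall w, Sigma w -> Sigma (shift w)).

(* The union of the forward orbits of the F j is dense in Sigma: every basic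
   (cylinder) neighbourhood of a point of Sigma meets it. *)
Definition dense_orbit (A : Type) (Sigma : (nat -> A) -> Prop) (k : nat)
    (F : 'I_k -> nat -> A) : Prop :=
  forall w, Sigma w -> forall N, exists j m, forall i, i < N ->
    iter m (@shift A) (F j) i = w i.

Definition in_language (A : Type) (Sigma : (nat -> A) -> Prop) (v : seq A) : Prop :=
  exists w p, Sigma w /\ v = mkseq (fun i => w (p + i)) (size v).

Definition left_prolongable (A : Type) (Sigma : (nat -> A) -> Prop) (v : seq A) : Prop :=
  exists a : A, in_language Sigma (a :: v).

Definition e_l (A : finType) (Sigma : (nat -> A) -> Prop) (n : nat) : nat :=
  #|[set v : n.-tuple A |
      `[< in_language Sigma (tval v) /\ ~ left_prolongable Sigma (tval v) >]]|.

(* A word v of the language occurs in some w of Sigma; by density some shift of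
   some F j agrees with w long enough, so v occurs in F j. Since F j lies in
   Sigma, an occurrence at a positive position would make v left-prolongable.
   Hence every non-left-prolongable word is a prefix of one of the k points F j. *)
From mathcomp Require Import all_boot.
From mathcomp Require Import boolp.
From mathcomp Require Import zify.

Set Implicit Arguments. Unset Strict Implicit. Unset Printing Implicit Defensive.

Lemma iter_shiftE (A : Type) m (w : nat -> A) i : iter m (@shift A) w i = w (m + i).
Proof. by elim: m i => [|m IH] i //=; rewrite /shift IH addSnnS. Qed.

Lemma eq_in_mkseq (T : Type) (f g : nat -> T) n :
  (forall i, i < n -> f i = g i) -> mkseq f n = mkseq g n.
Proof.
move=> eq_fg; apply: (@eq_from_nth _ (f 0)); rewrite !size_mkseq // => i lt_in.
by rewrite !nth_mkseq // eq_fg.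
Qed.

Section NonProlongable.

Variables (A : Type) (Sigma : (nat -> A) -> Prop).

Lemma left_prolongable_occurrence w p (v : seq A) :
  Sigma w -> v = mkseq (fun i => w (p.+1 + i)) (size v) -> left_prolongable Sigma v.
Proof.
move=> Sw def_v; exists (w p), w, p; split; first exact: Sw.
rewrite /= /mkseq /=; congr (_ :: _); first by congr w; lia.
rewrite -(addn0 1) iotaDl -map_comp def_v size_mkseq.
apply: eq_in_mkseq => i _ /=; congr w; lia.
Qed.

Lemma not_left_prolongable_prefix k (F : 'I_k -> nat -> A) (v : seq A) :
  (forall j, Sigma (F j)) -> dense_orbit Sigma F ->
  in_language Sigma v -> ~ left_prolongable Sigma v ->
  exists j, v = mkseq (F j) (size v).
Proof.
move=> SF dense [w [p [Sw def_v]]] not_lp.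
have [j [m agree]] := dense w Sw (p + size v).
have v_in_Fj : v = mkseq (fun i => F j (m + p + i)) (size v).
  rewrite def_v size_mkseq; apply: eq_in_mkseq => i lt_iv.
  by rewrite -agree ?iter_shiftE ?addnA //; lia.
exists j; case: (m + p) v_in_Fj => [|q] v_in_Fj; first exact: v_in_Fj.
by case: (not_lp (left_prolongable_occurrence (SF j) v_in_Fj)).
Qed.

End NonProlongable.

Theorem lemma2p15 (A : finType) (Sigma : (nat -> A) -> Prop)
    (k : nat) (F : 'I_k -> nat -> A) :
  subshift Sigma ->
  injective F ->
  (forall j, Sigma (F j)) ->
  dense_orbit Sigma F ->
  forall n : nat, e_l Sigma n <= k.
Proof.
move=> _ _ SF dense n.
pose prefix j : n.-tuple A := @Tuple n A (mkseq (F j) n) (introT eqP (size_mkseq _ _)).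
apply: (@leq_trans #|[set prefix j | j in 'I_k]|); last first.
  by rewrite -[k in _ <= k]card_ord leq_imset_card.
apply/subset_leq_card/subsetP => v; rewrite inE => /asboolP [v_in not_lp].
have [j def_v] := not_left_prolongable_prefix SF dense v_in not_lp.
apply/imsetP; exists j => //; apply: val_inj.
by rewrite /= def_v size_tuple.
Qed.
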